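(* Let $G$ be the graph defined below. An order automorphism of $\mathbb Q$ is a bijection $\gamma\colon\mathbb Q\to\mathbb Q$ with $q<r \iff \gamma(q)<\gamma(r)$. For such $\gamma$ define $\gamma_\uparrow, \gamma_\downarrow\colon V\to V$ by $\gamma_\uparrow(q^+)=(\gamma(q))^+$, $\gamma_\uparrow(q^-)=(\gamma(q))^-$, $\gamma_\downarrow(q^+)=(-\gamma(q))^-$, $\gamma_\downarrow(q^-)=(-\gamma(q))^+$. Then every $\gamma_\uparrow$ and every $\gamma_\downarrow$ is an automorphism of $G$, and conversely every automorphism of $G$ equals $\gamma_\uparrow$ or $\gamma_\downarrow$ for some order automorphism $\gamma$ of $\mathbb Q$.
   Context: Let $\mathbb Q^+=\{q^+: q\in\mathbb Q\}$ and $\mathbb Q^-=\{q^-: q\in\mathbb Q\}$ be two disjoint copies of $\mathbb Q$. $G$ is the simple undirected graph with vertex set $V=\mathbb Q^+\cup\mathbb Q^-$ in which the edges are exactly the pairs $\{q^+,r^-\}$ with $q,r\in\mathbb Q$ and $q<r$ (there are no edges inside $\mathbb Q^+$ or inside $\mathbb Q^-$). *)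

From HB Require Import structures.
From mathcomp Require Import all_boot all_order all_algebra.
Set Implicit Arguments. Unset Strict Implicit. Unset Printing Implicit Defensive.
Import Order.TTheory GRing.Theory Num.Theory.
Local Open Scope ring_scope.

(* Vertex type V = Q^+ ∪ Q^-.  Vplus q = q^+, Vminus q = q^-. *)
Inductive V : Type := Vplus of rat | Vminus of rat.

Definition Gadj (x y : V) : Prop :=
  match x, y with
  | Vplus q, Vminus r => q < r
  | Vminus r, Vplus q => q < r
  | _, _ => False
  end.

Definition order_automorphism (g : rat -> rat) : Prop :=
  bijective g /\ forall q r : rat, q < r <-> g q < g r.

Definition graph_automorphism (f : V -> V) : Prop :=
  bijective f /\ forall x y : V, Gadj x y <-> Gadj (f x) (f y).

Definition gamma_up (g : rat -> rat) (x : V) : V :=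
  match x with
  | Vplus q => Vplus (g q)
  | Vminus q => Vminus (g q)
  end.

Definition gamma_down (g : rat -> rat) (x : V) : V :=
  match x with
  | Vplus q => Vminus (- g q)
  | Vminus q => Vplus (- g q)
  end.

From HB Require Import structures.
From mathcomp Require Import all_boot all_order all_algebra.
From Stdlib Require Import FunctionalExtensionality.
Set Implicit Arguments. Unset Strict Implicit. Unset Printing Implicit Defensive.
Import Order.TTheory GRing.Theory Num.Theory.
Local Open Scope ring_scope.

(* Two vertices on the same side have a common neighbour and two vertices on
   opposite sides have none, so an automorphism of G either keeps both sides
   or swaps them.  Composing with the swap q^+ <-> (-q)^- reduces to the first
   case, where f(q^+) = (g q)^+ and f(r^-) = (h r)^- with q < r <-> g q < h r.
   Taking r = q gives h <= g, hence both g and h are increasing; if h r = g q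
   then r <= q, so g q = h r <= h q and therefore g = h. *)

Section CrossMonotone.
Variables (d : Order.disp_t) (T : orderType d) (g h : T -> T).
Hypothesis cross : forall q r : T, (q < r)%O <-> (g q < h r)%O.

Lemma cross_le q : (h q <= g q)%O.
Proof. by rewrite leNgt; apply/negP => /(cross q q); rewrite ltxx. Qed.

Lemma cross_homo_l : {homo g : q r / (q < r)%O}.
Proof. by move=> q r /(cross q r)/lt_le_trans; apply; apply: cross_le. Qed.

Lemma cross_homo_r : {homo h : q r / (q < r)%O}.
Proof. by move=> q r /(cross q r); apply: le_lt_trans; apply: cross_le. Qed.

Lemma cross_eq : (forall y, exists r, h r = y) -> g =1 h.
Proof.
move=> h_onto q; have [r hr] := h_onto (g q).
have le_rq : (r <= q)%O by rewrite leNgt; apply/negP => /(cross q r); rewrite hr ltxx.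
by apply/eqP; rewrite eq_le cross_le andbT -hr (le_mono cross_homo_r).
Qed.

End CrossMonotone.

Lemma order_automorphism_incr (g : rat -> rat) :
  {homo g : q r / q < r} -> (forall y, exists q, g q = y) ->
  order_automorphism g.
Proof.
move=> g_incr g_onto; split; last by move=> q r; rewrite (leW_mono (le_mono g_incr)).
have g_inj : injective g := inc_inj (le_mono g_incr).
have g_onto' y : exists q, g q == y by have [q <-] := g_onto y; exists q.
have g'K : cancel (fun y => xchoose (g_onto' y)) g.
  by move=> y; apply/eqP/(xchooseP (g_onto' y)).
by apply: (Bijective _ g'K) => q; apply: g_inj; rewrite g'K.
Qed.

Lemma graph_automorphism_comp (f1 f2 : V -> V) :
  graph_automorphism f1 -> graph_automorphism f2 ->
  graph_automorphism (f1 \o f2).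
Proof.
move=> [f1_bij f1_adj] [f2_bij f2_adj]; split; first exact: bij_comp.
by move=> x y; apply: iff_trans (f2_adj x y) (f1_adj _ _).
Qed.

Definition is_plus (x : V) : bool := if x is Vplus _ then true else false.

Definition coord (x : V) : rat := match x with Vplus q | Vminus q => q end.

Definition swap_neg (x : V) : V :=
  match x with Vplus q => Vminus (- q) | Vminus q => Vplus (- q) end.

Lemma swap_negK : involutive swap_neg.
Proof. by case=> q /=; rewrite opprK. Qed.

Lemma is_plus_swap_neg x : is_plus (swap_neg x) = ~~ is_plus x.
Proof. by case: x. Qed.

Lemma graph_automorphism_swap_neg : graph_automorphism swap_neg.
Proof.
split; first exact: (Bijective swap_negK swap_negK).
by case=> q; case=> r //=; rewrite ltrN2.
Qed.

Lemma graph_automorphism_gamma_up g :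
  order_automorphism g -> graph_automorphism (gamma_up g).
Proof.
move=> [[g' gK g'K] g_lt]; split; last by case=> q; case=> r //=; apply: g_lt.
by exists (gamma_up g') => -[] q /=; rewrite ?gK ?g'K.
Qed.

Lemma gamma_downE g : gamma_down g = swap_neg \o gamma_up g.
Proof. by apply: functional_extensionality; case. Qed.

Lemma common_neighbourP x y :
  (exists z, Gadj x z /\ Gadj y z) <-> is_plus x = is_plus y.
Proof.
split; first by case=> z []; case: x => ?; case: y => ?; case: z.
have lt_max (a b : rat) : a < Num.max a b + 1 by apply: ltr_pwDr => //; rewrite le_max lexx.
have gt_min (a b : rat) : Num.min a b - 1 < a.
  by rewrite ltrBlDr; apply: ltr_pwDr => //; rewrite ge_min lexx.
case: x => q; case: y => r //= _.
  by exists (Vminus (Num.max q r + 1)); split; last rewrite maxC; apply: lt_max.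
by exists (Vplus (Num.min q r - 1)); split; last rewrite minC; apply: gt_min.
Qed.

Lemma graph_automorphism_is_plus f : graph_automorphism f ->
  forall x y, is_plus (f x) = is_plus (f y) <-> is_plus x = is_plus y.
Proof.
move=> [[f' fK f'K] f_adj] x y.
split=> /common_neighbourP [z [xz yz]]; apply/common_neighbourP.
  by exists (f' z); split; apply/(f_adj _ (f' z)); rewrite f'K.
by exists (f z); split; apply/(f_adj _ z).
Qed.

Lemma graph_automorphism_sides f : graph_automorphism f ->
  (forall x, is_plus (f x) = is_plus x) \/ (forall x, is_plus (f x) = ~~ is_plus x).
Proof.
move=> /graph_automorphism_is_plus f_side.
case f0: (is_plus (f (Vplus 0))); [left|right] => x; have := f_side x (Vplus 0);
  by rewrite f0 /=; case: (is_plus (f x)); case: (is_plus x); intuition.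
Qed.

Lemma graph_automorphism_gamma_upP f :
  graph_automorphism f -> (forall x, is_plus (f x) = is_plus x) ->
  exists g, order_automorphism g /\ f = gamma_up g.
Proof.
move=> [[f' fK f'K] f_adj] f_side.
pose g q := coord (f (Vplus q)); pose h q := coord (f (Vminus q)).
have fP q : f (Vplus q) = Vplus (g q).
  by have := f_side (Vplus q); rewrite /g; case: (f (Vplus q)).
have fM q : f (Vminus q) = Vminus (h q).
  by have := f_side (Vminus q); rewrite /h; case: (f (Vminus q)).
have cross q r : q < r <-> g q < h r.
  by have := f_adj (Vplus q) (Vminus r); rewrite fP fM.
have h_onto y : exists r, h r = y.
  have := f_side (f' (Vminus y)); rewrite f'K.
  by case E: (f' (Vminus y)) => [r|r] // _; exists r; rewrite /h -E f'K.
have g_eq := cross_eq cross h_onto.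
exists g; split.
  apply: order_automorphism_incr (cross_homo_l cross) _ => y.
  by have [r <-] := h_onto y; exists r.
by apply: functional_extensionality => -[] q /=; rewrite ?fP ?fM ?g_eq.
Qed.

Theorem mainTheorem2 :
  (forall g : rat -> rat, order_automorphism g ->
     graph_automorphism (gamma_up g) /\ graph_automorphism (gamma_down g)) /\
  (forall f : V -> V, graph_automorphism f ->
     exists g : rat -> rat, order_automorphism g /\
       (f = gamma_up g \/ f = gamma_down g)).
Proof.
split=> [g /graph_automorphism_gamma_up g_up | f f_aut].
  split; rewrite // gamma_downE.
  exact: graph_automorphism_comp graph_automorphism_swap_neg g_up.
have [f_side | f_swap] := graph_automorphism_sides f_aut.
  by have [g [g_aut ->]] := graph_automorphism_gamma_upP f_aut f_side; exists g; split; [|left].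
have swap_f_side x : is_plus ((swap_neg \o f) x) = is_plus x.
  by rewrite /= is_plus_swap_neg f_swap negbK.
have [g [g_aut swap_fE]] := graph_automorphism_gamma_upP
  (graph_automorphism_comp graph_automorphism_swap_neg f_aut) swap_f_side.
exists g; split=> //; right; rewrite gamma_downE -swap_fE.
by apply: functional_extensionality => x /=; rewrite swap_negK.
Qed.
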